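(* Let $a,b,c$ be parameters (real or complex numbers) such that no denominator below vanishes, let $u(n,a,b,c)=\frac{\prod_{j=0}^{n-1}(b+jc)}{\prod_{j=0}^{n-1}(a+jc)}$, and for integers $n\ge1$, $m\ge0$ let $$D(n,m,a,b,c)=\det\big(u(i+j+m,a,b,c)\big)_{i,j=0}^{n-1}.$$ Then $$D(n,0,a,b,c)=\prod_{k=1}^{n-1}\frac{k!\,c^k\prod_{j=0}^{k-1}(b+jc)(a-b+jc)}{\prod_{j=0}^{k-1}(a+(j+k-1)c)\prod_{j=0}^{2k-1}(a+jc)}$$ and $$D(n,m,a,b,c)=D(n,0,a,b,c)\prod_{j=0}^{m-1}\prod_{i=0}^{n-1}\frac{b+(j+i)c}{a+(i+n+j-1)c}.$$
   Context: Empty products equal $1$. *)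

From HB Require Import structures.
From mathcomp Require Import all_boot all_order all_algebra.
Set Implicit Arguments. Unset Strict Implicit. Unset Printing Implicit Defensive.
Import Order.TTheory GRing.Theory Num.Theory.
Local Open Scope ring_scope.

Definition u (R : numFieldType) (n : nat) (a b c : R) : R :=
  (\prod_(j < n) (b + j%:R * c)) / (\prod_(j < n) (a + j%:R * c)).

Definition D (R : numFieldType) (n m : nat) (a b c : R) : R :=
  \det (\matrix_(i < n, j < n) u (i + j + m) a b c).

From HB Require Import structures.
From mathcomp Require Import all_boot all_order all_algebra.
From mathcomp Require Import ring zify.
Set Implicit Arguments. Unset Strict Implicit. Unset Printing Implicit Defensive.
Import Order.TTheory GRing.Theory Num.Theory.
Local Open Scope ring_scope.

(* Write (b)_k = prod_{t<k} (b + t c).  The entry u(i+j+m) equals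
   (b)_{i+m} / (a)_{i+m+n-1} times P_j((i+m) c), where
   P_j(X) = prod_{t<j} (X + b + t c) * prod_{t<n-1-j} (X + a + (j+t) c)
   has degree n-1 and is a multiple of the Newton polynomial
   N_j = prod_{t<j} (X - r_t) on the nodes r_t = -(b + t c).  Expanding the
   P_j in the Newton basis is an upper triangular change of basis whose
   diagonal entries are (P_j / N_j)(r_j) = (a-b)_{n-1-j}, and det (N_k(x_i))
   is the Vandermonde determinant of the nodes x_i = (i+m) c, which is
   prod_k k! c^k.  Hence
   D(n,m) = prod_{k<n} k! c^k (a-b)_k (b)_{k+m} / (a)_{k+m+n-1},
   and both formulas are rearrangements of this product. *)

Section NewtonBasis.

Variables (R : fieldType) (r : nat -> R).

Definition newton_basis (k : nat) : {poly R} := \prod_(t < k) ('X - (r t)%:P).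

Lemma newton_basisS k : newton_basis k.+1 = newton_basis k * ('X - (r k)%:P).
Proof. by rewrite /newton_basis big_ord_recr. Qed.

Lemma monic_newton_basis k : newton_basis k \is monic.
Proof. by apply: monic_prod => t _; apply: monicXsubC. Qed.

Lemma size_newton_basis k : size (newton_basis k) = k.+1.
Proof.
elim: k => [|k IHk]; first by rewrite /newton_basis big_ord0 size_poly1.
rewrite newton_basisS size_Mmonic ?monicXsubC ?IHk ?size_XsubC ?addn2 //.
exact: monic_neq0 (monic_newton_basis k).
Qed.

Lemma newton_expansion k d (g : {poly R}) :
  (size (newton_basis k * g)%R <= k + d)%N ->
  exists c : nat -> R, [/\ forall l, (l < k)%N -> c l = 0, c k = g.[r k] &
    newton_basis k * g = \sum_(l < k + d) c l *: newton_basis l].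
Proof.
elim: d k g => [|d IHd] k g size_g.
  have -> : g = 0.
    apply: contraTeq size_g => g_neq0.
    rewrite size_monicM ?monic_newton_basis // size_newton_basis addn0 -ltnNge.
    by have := size_poly_gt0 g; rewrite g_neq0; lia.
  by exists (fun=> 0); rewrite horner0 mulr0 big1 // => l _; rewrite scale0r.
set q := 'X - (r k)%:P; set h := g %/ q.
have g_eq : g = h * q + (g.[r k])%:P by rewrite -modp_XsubC -divp_eq.
have rest_eq : newton_basis k * g - g.[r k] *: newton_basis k
               = newton_basis k.+1 * h.
  by rewrite {1}g_eq newton_basisS mulrDr -mul_polyC [_%:P * _]mulrC addrK
     mulrAC -mulrA mulrC.
have [c' [c'_lt c'_k c'_eq]] : exists c' : nat -> R,
    [/\ forall l, (l < k.+1)%N -> c' l = 0, c' k.+1 = h.[r k.+1] &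
    newton_basis k.+1 * h = \sum_(l < k.+1 + d) c' l *: newton_basis l].
  apply: IHd; rewrite -rest_eq addSnnS.
  apply: (leq_trans (size_polyD _ _)); rewrite geq_max size_g size_polyN.
  apply: (leq_trans (size_scale_leq _ _)).
  by rewrite size_newton_basis addnS ltnS leq_addr.
exists (fun l => if l == k then g.[r k] else c' l); split.
- by move=> l lt_lk; rewrite (ltn_eqF lt_lk) c'_lt // ltnS ltnW.
- by rewrite eqxx.
have lt_k : (k < k + d.+1)%N by rewrite addnS ltnS leq_addr.
rewrite (bigD1 (Ordinal lt_k)) //= eqxx.
rewrite -[LHS](subrK (g.[r k] *: newton_basis k)) rest_eq addrC; congr (_ + _).
rewrite c'_eq addSnnS (bigD1 (Ordinal lt_k)) //= c'_lt // scale0r add0r.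
by apply: eq_bigr => l /negbTE; rewrite -val_eqE /= => ->.
Qed.

Lemma det_horner_newton_basis n (x : nat -> R) :
  \det (\matrix_(i < n, k < n) (newton_basis k).[x i]) =
  \prod_(i < n) \prod_(j < n | (i < j)%N) (x j - x i).
Proof.
pose T := \matrix_(l < n, k < n) (newton_basis k)`_l.
have -> : \matrix_(i < n, k < n) (newton_basis k).[x i] =
          (Vandermonde n (\row_(i < n) x i))^T *m T.
  apply/matrixP => i k; rewrite !mxE (@horner_coef_wide _ n); last first.
    by rewrite size_newton_basis.
  by apply: eq_bigr => l _; rewrite !mxE mulrC.
have det_T : \det T = 1.
  rewrite -det_tr det_trig; last first.
    by apply/is_trig_mxP => k l lt_lk; rewrite !mxE nth_default ?size_newton_basis.
  apply: big1 => k _; rewrite !mxE.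
  by have /monicP := monic_newton_basis k; rewrite lead_coefE size_newton_basis.
rewrite det_mulmx det_tr det_T mulr1 det_Vandermonde.
by apply: eq_bigr => i _; apply: eq_bigr => j _; rewrite !mxE.
Qed.

Lemma det_horner_newton_mul n (x : nat -> R) (G : nat -> {poly R}) :
  (forall j, (j < n)%N -> (size (newton_basis j * G j)%R <= n)%N) ->
  \det (\matrix_(i < n, j < n) (newton_basis j * G j).[x i]) =
  (\prod_(i < n) \prod_(j < n | (i < j)%N) (x j - x i)) *
  \prod_(j < n) (G j).[r j].
Proof.
move=> size_G.
have /fin_all_exists[C C_spec] : forall j : 'I_n, exists c : nat -> R,
    [/\ forall l, (l < j)%N -> c l = 0, c j = (G j).[r j] &
    newton_basis j * G j = \sum_(l < n) c l *: newton_basis l].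
  move=> j; have := @newton_expansion j (n - j) (G j).
  by rewrite subnKC ?(ltnW (ltn_ord j)) //; apply; apply: size_G.
pose Cm := \matrix_(l < n, j < n) C j l.
have -> : \matrix_(i < n, j < n) (newton_basis j * G j).[x i] =
          \matrix_(i < n, k < n) (newton_basis k).[x i] *m Cm.
  apply/matrixP => i j; rewrite !mxE; have [_ _ ->] := C_spec j.
  by rewrite horner_sum; apply: eq_bigr => l _; rewrite hornerZ !mxE mulrC.
rewrite det_mulmx det_horner_newton_basis det_trig; last first.
  apply/is_trig_mxP => l j lt_lj; rewrite mxE.
  by have [Cj0 _ _] := C_spec j; apply: Cj0.
by apply: congr1; apply: eq_bigr => j _; rewrite mxE; have [_ -> _] := C_spec j.
Qed.

End NewtonBasis.

Definition pochhammer (R : pzRingType) (a c : R) (N : nat) : R :=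
  \prod_(j < N) (a + j%:R * c).

Lemma pochhammerD (R : pzRingType) (a c : R) N M :
  pochhammer a c (N + M) =
  pochhammer a c N * \prod_(t < M) (a + (N + t)%:R * c).
Proof. exact: big_split_ord. Qed.

Lemma uE (R : numFieldType) n (a b c : R) :
  u n a b c = pochhammer b c n / pochhammer a c n.
Proof. by []. Qed.

Lemma u_factor (R : numFieldType) k j p (a b c : R) :
  pochhammer a c (k + j + p) != 0 ->
  u (k + j) a b c =
  pochhammer b c k / pochhammer a c (k + j + p) *
  ((\prod_(t < j) (b + (k + t)%:R * c)) *
   \prod_(t < p) (a + (k + j + t)%:R * c)).
Proof.
rewrite uE !pochhammerD !mulf_eq0 !negb_or => /andP[/andP[Pa Qj] Qp].
by field; rewrite Pa Qj Qp.
Qed.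

Lemma prod_vandermonde_arith (R : comPzRingType) n (c : R) :
  \prod_(i < n) \prod_(j < n | (i < j)%N) (j%:R * c - i%:R * c) =
  \prod_(k < n) (k`!%:R * c ^+ k).
Proof.
rewrite (exchange_big_dep xpredT) //=; apply: eq_bigr => j _.
transitivity (\prod_(i < j) (j%:R * c - i%:R * c)).
  rewrite (big_ord_widen n (fun i : nat => j%:R * c - i%:R * c)) //.
  exact: ltnW.
rewrite (reindex_inj rev_ord_inj) /=.
transitivity (\prod_(i < j) (i.+1%:R * c)).
  by apply: eq_bigr => i _; rewrite natrB ?rev_ord_proof //; ring.
rewrite big_split /= prodr_const card_ord -natr_prod fact_prod big_add1 /=.
by rewrite big_mkord.
Qed.

Lemma D_closed_form (R : numFieldType) n m (a b c : R) :
  (forall k, (k.+2 < 2 * n + m)%N -> a + k%:R * c != 0) ->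
  D n m a b c =
  \prod_(k < n) (k`!%:R * c ^+ k * pochhammer (a - b) c k *
    pochhammer b c (k + m) / pochhammer a c (k + m + n.-1)).
Proof.
move=> a_neq0.
pose x i := (i + m)%:R * c.
pose N := newton_basis (fun t => - (b + t%:R * c)).
pose G j := newton_basis (fun t => - (a + (j + t)%:R * c)) (n - j.+1).
pose scale i := pochhammer b c (i + m) / pochhammer a c (i + m + n.-1).
have entry (i j : 'I_n) : u (i + j + m) a b c = scale i * (N j * G j).[x i].
  have e : (i + m + j + (n - j.+1) = i + m + n.-1)%N.
    by have := ltn_ord i; have := ltn_ord j; lia.
  rewrite addnAC (@u_factor _ _ _ (n - j.+1)) e; last first.
    apply/prodf_neq0 => t _; apply: a_neq0.
    by have := ltn_ord t; have := ltn_ord i; have := ltn_ord j; lia.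
  rewrite hornerM !horner_prod; congr (_ * (_ * _)); apply: eq_bigr => t _;
    by rewrite hornerXsubC /x !natrD; ring.
have -> : D n m a b c =
    \det (diag_mx (\row_(i < n) scale i) *m
          \matrix_(i < n, j < n) (N j * G j).[x i]).
  rewrite /D; congr (\det _); apply/matrixP => i j.
  by rewrite mul_diag_mx !mxE entry.
rewrite det_mulmx det_diag det_horner_newton_mul; last first.
  move=> j lt_jn; rewrite size_Mmonic ?monic_newton_basis ?size_newton_basis //;
    [lia | exact: monic_neq0 (monic_newton_basis _ _)].
transitivity (\prod_(k < n) scale k *
  ((\prod_(k < n) (k`!%:R * c ^+ k)) * \prod_(k < n) pochhammer (a - b) c k)).
  congr (_ * (_ * _)).
  - by apply: eq_bigr => i _; rewrite mxE.
  - rewrite -prod_vandermonde_arith; apply: eq_bigr => i _; apply: eq_bigr => j _.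
    by rewrite /x !natrD; ring.
  - rewrite (reindex_inj rev_ord_inj); apply: eq_bigr => j _.
    rewrite horner_prod subnSK // subKn 1?ltnW // /pochhammer.
    by apply: eq_bigr => t _; rewrite hornerXsubC natrD; ring.
by rewrite -!big_split /=; apply: eq_bigr => k _; rewrite /scale; ring.
Qed.

Lemma prod_pochhammer_shift (R : comPzRingType) n (a c : R) :
  \prod_(1 <= k < n.+1)
    ((\prod_(j < k) (a + (j + k - 1)%:R * c)) * pochhammer a c (2 * k)) =
  \prod_(k < n.+1) pochhammer a c (k + n).
Proof.
elim: n => [|n IHn]; first by rewrite big_geq // big_ord1 /pochhammer big_ord0.
rewrite big_nat_recr //= IHn [RHS]big_ord_recr /=.
have poch_succ k : pochhammer a c (k + n.+1) =
                   pochhammer a c (k + n) * (a + (k + n)%:R * c).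
  by rewrite addnS -addn1 pochhammerD big_ord1 addn0.
under [in RHS]eq_bigr do rewrite poch_succ.
rewrite big_split /= -!mulrA; congr (_ * (_ * _)).
- by apply: eq_bigr => j _; do 3 f_equal; lia.
- by rewrite /pochhammer mul2n -addnn.
Qed.

Unset Implicit Arguments.

Theorem corollary2 (R : numFieldType) (n m : nat) (a b c : R)
  (hn : (1 <= n)%N)
  (ha : forall j : nat, (j.+2 < 2 * n + m)%N -> a + j%:R * c != 0) :
  D n 0 a b c =
    \prod_(1 <= k < n)
      (((k`!)%:R * c ^+ k *
          \prod_(j < k) ((b + j%:R * c) * (a - b + j%:R * c))) /
       ((\prod_(j < k) (a + (j + k - 1)%:R * c)) *
          \prod_(j < 2 * k) (a + j%:R * c)))
  /\
  D n m a b c =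
    D n 0 a b c *
      \prod_(j < m) \prod_(i < n)
        ((b + (j + i)%:R * c) / (a + (i + n + j - 1)%:R * c)).
Proof.
have ha0 k : (k.+2 < 2 * n + 0)%N -> a + k%:R * c != 0.
  by move=> lt_k; apply: ha; lia.
rewrite (D_closed_form b ha0) (D_closed_form b ha).
case: n hn {ha ha0} => [//|n] _; split.
- rewrite [RHS]prodf_div (prod_pochhammer_shift n a c).
  rewrite prodf_div; congr (_ / _); last by apply: eq_bigr => k _; rewrite addn0.
  rewrite big_ord_recl big_add1 /= big_mkord /pochhammer !big_ord0 !mulr1 mul1r.
  by apply: eq_bigr => k _; rewrite addn0 big_split /= /bump add1n; ring.
- rewrite exchange_big -big_split /=; apply: eq_bigr => k _.
  rewrite !addn0 addnAC !pochhammerD /= prodf_div invfM.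
  have -> : \prod_(j < m) (b + (j + k)%:R * c) = \prod_(t < m) (b + (k + t)%:R * c).
    by apply: eq_bigr => j _; rewrite addnC.
  have -> : \prod_(j < m) (a + (k + n.+1 + j - 1)%:R * c) =
            \prod_(t < m) (a + (k + n + t)%:R * c).
    by apply: eq_bigr => j _; do 3 f_equal; lia.
  ring.
Qed.
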